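(* Let $\mathcal{A}$ be a finite alphabet, $\Theta:\mathcal{A}^*\to\mathcal{A}^*$ an involutive antimorphism, and $\mathbf{u}\in\mathcal{A}^{\mathbb{N}}$ a recurrent infinite word with $D_\Theta(\mathbf{u})<+\infty$. Then the language of $\mathbf{u}$ is closed under $\Theta$, i.e., for every factor $w$ of $\mathbf{u}$, $\Theta(w)$ is also a factor of $\mathbf{u}$.
   Context: An involutive antimorphism on $\mathcal{A}^*$ is a map $\Theta$ with $\Theta^2=\mathrm{Id}$ and $\Theta(uv)=\Theta(v)\Theta(u)$ for all words $u,v$. A word $w$ is a $\Theta$-palindrome if $\Theta(w)=w$. For a finite word $w$, $\mathrm{Pal}_\Theta(w)$ is the set of distinct $\Theta$-palindromes occurring as factors of $w$ (including the empty word), and $G_\Theta(w)$ is the number of sets $\{a,\Theta(a)\}$ where $a$ is a letter occurring in $w$ with $a\neq\Theta(a)$. The $\Theta$-palindromic defect of a finite word is $D_\Theta(w)=|w|+1-G_\Theta(w)-\#\mathrm{Pal}_\Theta(w)$, and for an infinite word $\mathbf{u}$, $D_\Theta(\mathbf{u})=\sup\{D_\Theta(w): w \text{ a factor of } \mathbf{u}\}$. An infinite word is recurrent if each of its factors occurs in it infinitely many times. *)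

From mathcomp Require Import all_boot all_order all_algebra.
Set Implicit Arguments. Unset Strict Implicit. Unset Printing Implicit Defensive.

Section Words.
Variable A : finType.

Definition involutive_antimorphism (Th : seq A -> seq A) : Prop :=
  (forall w, Th (Th w) = w) /\ (forall u v, Th (u ++ v) = Th v ++ Th u).

Definition is_pal (Th : seq A -> seq A) (w : seq A) : bool := Th w == w.

Definition factors_fin (w : seq A) : seq (seq A) :=
  [seq take j (drop i w) | i <- iota 0 (size w).+1, j <- iota 0 (size w).+1].

Definition Pal (Th : seq A -> seq A) (w : seq A) : seq (seq A) :=
  undup [seq x <- factors_fin w | is_pal Th x].

(* image of a letter under Theta (Theta maps letters to letters) *)
Definition th_letter (Th : seq A -> seq A) (a : A) : A := head a (Th [:: a]).

Definition G (Th : seq A -> seq A) (w : seq A) : nat :=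
  #| [set [set a; th_letter Th a] | a in [set x : A | (x \in w) && (Th [:: x] != [:: x])]] |.

Definition defect (Th : seq A -> seq A) (w : seq A) : int :=
  ((size w).+1)%:Z - (G Th w)%:Z - (size (Pal Th w))%:Z.

Definition occurs_at (u : nat -> A) (w : seq A) (i : nat) : Prop :=
  w = mkseq (fun k => u (i + k)) (size w).

Definition factor (u : nat -> A) (w : seq A) : Prop := exists i, occurs_at u w i.

Definition recurrent (u : nat -> A) : Prop :=
  forall w, factor u w -> forall N, exists i, (N <= i)%N /\ occurs_at u w i.

(* D_Theta(u) < +oo : the defects of the factors are bounded *)
Definition finite_defect (Th : seq A -> seq A) (u : nat -> A) : Prop :=
  exists K : int, forall w, factor u w -> (defect Th w <= K)%R.

End Words.

From mathcomp Require Import all_boot all_order all_algebra zify.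
From Stdlib Require Import Classical.
Set Implicit Arguments. Unset Strict Implicit. Unset Printing Implicit Defensive.

(* Appending a letter to a word w creates at most one new Theta-palindromic
   factor (its longest palindromic suffix) and at most one new pair {a, Theta a},
   so the defect is nondecreasing along the prefixes of u. Being bounded, it is
   eventually constant; past that point, appending a letter already present
   must create a new palindromic suffix. By recurrence, a prefix P of u
   containing w reappears later, ending at such a position; the new palindromic
   suffix q is not a factor of the earlier prefix, so it is longer than P, hence
   ends with P and, being a Theta-palindrome, begins with Theta(P), which
   contains Theta(w). *)

Section Factors.
Variable T : eqType.
Implicit Types (a : T) (p v x y : seq T).

Lemma prefix_shorter x y v : prefix x v -> prefix y v -> size x <= size y -> prefix x y.
Proof.
rewrite !prefixE => /eqP Ex /eqP Ey le_xy.
by rewrite -Ey take_takel // Ex.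
Qed.

Lemma suffix_shorter x y v : suffix x v -> suffix y v -> size x <= size y -> suffix x y.
Proof.
rewrite -!prefix_rev -(size_rev x) -(size_rev y); exact: prefix_shorter.
Qed.

Lemma suffix_new_infix x p a : infix x (rcons p a) -> ~~ infix x p -> suffix x (rcons p a).
Proof. by rewrite infix_rconsl => /orP [] // ->. Qed.

Lemma mem_suffix_infix_rcons x p a :
  x != [::] -> suffix x (rcons p a) -> infix x p -> a \in p.
Proof.
case/lastP: x => [//|x c] _; rewrite suffix_rcons => /andP [/eqP <- _] /mem_infix.
by apply; rewrite mem_rcons mem_head.
Qed.

End Factors.

Lemma mem_factors_fin (A : finType) (x w : seq A) : (x \in factors_fin w) = infix x w.
Proof.
apply/allpairsP/idP => [[[i j] /= [_ _ ->]]|ixw].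
  exact: infix_trans (infix_take _ j) (infix_drop _ _).
have /infixP [s [s' Ew]] := ixw.
have le_sw : size s <= size w by rewrite Ew size_cat leq_addr.
have le_xw : size x <= size w := size_subseq (infixW ixw).
exists (size s, size x); rewrite !mem_iota !add0n !ltnS le_sw le_xw.
by rewrite Ew drop_size_cat // take_size_cat.
Qed.

Section ThetaPalindromes.
Variables (A : finType) (Th : seq A -> seq A).
Hypothesis Th_antimorph : involutive_antimorphism Th.
Implicit Types (a : A) (p q v x y : seq A).

Local Notation th := (th_letter Th).

Lemma ThK : involutive Th. Proof. by case: Th_antimorph. Qed.

Lemma Th_cat x y : Th (x ++ y) = Th y ++ Th x. Proof. by case: Th_antimorph. Qed.

Lemma Th_nil : Th [::] = [::].
Proof.
have := congr1 size (Th_cat [::] [::]); rewrite size_cat.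
by case: (Th [::]) => //= b s; lia.
Qed.

Lemma Th_eq_nil x : Th x = [::] -> x = [::].
Proof. by move=> Thx; rewrite -(ThK x) Thx Th_nil. Qed.

Lemma Th_letter a : Th [:: a] = [:: th a].
Proof.
rewrite /th_letter; case Ea: (Th [:: a]) => [|b [|c s]] //=.
  by have := Th_eq_nil Ea.
have := ThK [:: a]; rewrite Ea -cat1s Th_cat.
case Ecs: (Th (c :: s)) => [|x xs]; first by have := Th_eq_nil Ecs.
case Eb: (Th [:: b]) => [|y ys]; first by have := Th_eq_nil Eb.
by case: xs Ecs.
Qed.

Lemma th_letterK : involutive th.
Proof. by move=> a; have := ThK [:: a]; rewrite !Th_letter => -[]. Qed.

Lemma Th_rcons p a : Th (rcons p a) = th a :: Th p.
Proof. by rewrite -cats1 Th_cat Th_letter. Qed.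

Lemma infix_Th x y : infix x y -> infix (Th x) (Th y).
Proof. by case/infixP=> [s [s' ->]]; rewrite !Th_cat -catA infix_infix. Qed.

Lemma mem_Pal x w : (x \in Pal Th w) = infix x w && (Th x == x).
Proof. by rewrite mem_undup mem_filter mem_factors_fin andbC. Qed.

Lemma new_Pal_rcons_eq p a x y :
  x \in Pal Th (rcons p a) -> x \notin Pal Th p ->
  y \in Pal Th (rcons p a) -> y \notin Pal Th p -> x = y.
Proof.
wlog le_xy : x y / size x <= size y.
  move=> W Hx Hx' Hy Hy'; case: (leqP (size x) (size y)) => [|/ltnW] le.
    exact: W.
  exact/esym/W.
rewrite !mem_Pal => /andP [ix /eqP pal_x] new_x /andP [iy /eqP pal_y] new_y.
rewrite pal_x eqxx andbT in new_x; rewrite pal_y eqxx andbT in new_y.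
have sx := suffix_new_infix ix new_x; have sy := suffix_new_infix iy new_y.
have /suffixP [r Ey] := suffix_shorter sx sy le_xy.
have {}Ey : y = x ++ Th r by rewrite -pal_y Ey Th_cat pal_x.
case/lastP: (Th r) Ey => [|t b] Ey; first by rewrite Ey cats0.
case/suffixP: sy => s; rewrite Ey -!rcons_cat => /rcons_inj [Ep _].
by move: new_x; rewrite Ep infix_infix.
Qed.

Lemma size_Pal_rcons p a : size (Pal Th (rcons p a)) <= (size (Pal Th p)).+1.
Proof.
rewrite -addn1 -(count_predC (mem (Pal Th p))) leq_add //.
  rewrite -size_filter uniq_leq_size ?filter_uniq ?undup_uniq // => x.
  by rewrite mem_filter => /andP [].
rewrite -size_filter; set news := filter _ _.
have : uniq news by rewrite filter_uniq ?undup_uniq.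
have eq_news x y : x \in news -> y \in news -> x = y.
  rewrite !mem_filter /= => /andP [nx xin] /andP [ny yin].
  exact: new_Pal_rcons_eq xin nx yin ny.
case: news eq_news => [|x [|y s]] //= eq_news /andP [].
by rewrite (eq_news x y) ?inE ?eqxx ?orbT.
Qed.

Lemma Pal_rcons_sub p a : th a != a -> th a \notin p ->
  {subset Pal Th (rcons p a) <= Pal Th p}.
Proof.
move=> not_fixed not_in x; rewrite !mem_Pal => /andP [ix /eqP pal_x].
rewrite pal_x eqxx andbT; apply/negPn/negP => new_x.
have sx := suffix_new_infix ix new_x.
case/lastP: x ix new_x pal_x sx => [|x c] ix new_x pal_x sx.
  by rewrite infix0s in new_x.
move: (sx); rewrite suffix_rcons => /andP [/eqP ca _]; subst c.
have : th a \in rcons p a.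
  by apply: (mem_infix (suffixW sx)); rewrite -pal_x Th_rcons mem_head.
by rewrite mem_rcons inE (negbTE not_fixed) (negbTE not_in).
Qed.

Definition letter_pair a : {set A} := [set a; th a].

Lemma G_letter_pairs p :
  G Th p = #|letter_pair @: [set a | (a \in p) && (th a != a)]|.
Proof.
rewrite /G; suff -> : [set a | (a \in p) && (Th [:: a] != [:: a])] = [set a | (a \in p) && (th a != a)].
  by [].
by apply/setP => a; rewrite !inE Th_letter eqseq_cons andbT.
Qed.

Lemma G_rcons_mem p a : a \in p -> G Th (rcons p a) <= G Th p.
Proof.
move=> a_in; rewrite !G_letter_pairs; apply/subset_leq_card/imsetS/subsetP => b.
by rewrite !inE mem_rcons inE => /andP [/orP [/eqP ->|->] ->]; rewrite ?a_in.
Qed.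

Lemma G_rcons_paired p a : (th a == a) || (th a \in p) -> G Th (rcons p a) <= G Th p.
Proof.
move=> paired; rewrite !G_letter_pairs; apply/subset_leq_card/subsetP => P /imsetP [b].
rewrite !inE mem_rcons inE => /andP [/orP [/eqP ->|b_in] not_fixed] ->; last first.
  by apply: imset_f; rewrite inE b_in not_fixed.
rewrite (negbTE not_fixed) /= in paired.
have -> : letter_pair a = letter_pair (th a) by rewrite /letter_pair th_letterK setUC.
by apply: imset_f; rewrite inE paired th_letterK eq_sym not_fixed.
Qed.

Lemma G_rcons p a : G Th (rcons p a) <= (G Th p).+1.
Proof.
rewrite !G_letter_pairs.
apply: (@leq_trans #|letter_pair a |: (letter_pair @: [set b | (b \in p) && (th b != b)])|).
  apply/subset_leq_card/subsetP => P /imsetP [b].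
  rewrite !inE mem_rcons inE => /andP [/orP [/eqP ->|b_in] not_fixed] ->.
    by rewrite eqxx.
  by rewrite imset_f ?orbT // inE b_in not_fixed.
by rewrite cardsU1; case: (_ \notin _).
Qed.

Lemma defect_rcons p a : (defect Th p <= defect Th (rcons p a))%R.
Proof.
suff : G Th (rcons p a) + size (Pal Th (rcons p a)) <= (G Th p + size (Pal Th p)).+1.
  by rewrite /defect size_rcons; lia.
case: (boolP ((th a == a) || (th a \in p))) => [paired|].
  by have := G_rcons_paired paired; have := size_Pal_rcons p a; lia.
rewrite negb_or => /andP [not_fixed not_in].
have : size (Pal Th (rcons p a)) <= size (Pal Th p).
  exact: uniq_leq_size (undup_uniq _) (Pal_rcons_sub not_fixed not_in).
by have := G_rcons p a; lia.
Qed.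

Lemma defect_catr p v : (defect Th p <= defect Th (p ++ v))%R.
Proof.
elim/last_ind: v => [|v a IH]; first by rewrite cats0.
by rewrite -rcons_cat; apply: Order.le_trans IH (defect_rcons _ _).
Qed.

Lemma new_pal_suffix p a : a \in p -> (defect Th (rcons p a) <= defect Th p)%R ->
  exists q, [/\ suffix q (rcons p a), Th q = q & ~~ infix q p].
Proof.
move=> a_in stable.
have [old|/allPn [q]] := boolP (all (fun q => q \in Pal Th p) (Pal Th (rcons p a))).
  have : size (Pal Th (rcons p a)) <= size (Pal Th p).
    exact: uniq_leq_size (undup_uniq _) (allP old).
  have := G_rcons_mem a_in.
  by move: stable; rewrite /defect size_rcons; lia.
rewrite !mem_Pal => /andP [iq /eqP pal_q]; rewrite pal_q eqxx andbT => new_q.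
by exists q; split; last exact: new_q; first exact: suffix_new_infix.
Qed.

Lemma infix_Th_pal_suffix x p q v : suffix x v -> infix x p ->
  suffix q v -> Th q = q -> ~~ infix q p -> infix (Th x) v.
Proof.
move=> sx ix sq pal_q new_q.
have lt_xq : size x < size q.
  rewrite ltnNge; apply: contra new_q => le_qx.
  exact: infix_trans (suffixW (suffix_shorter sq sx le_qx)) ix.
case/suffixP: (suffix_shorter sx sq (ltnW lt_xq)) => r Eq.
apply: infix_trans (suffixW sq).
by rewrite -pal_q Eq Th_cat prefix_infix.
Qed.

End ThetaPalindromes.

Lemma bounded_int_seq_max (f : nat -> int) (K : int) :
  (forall n, (f n <= K)%R) -> exists N, forall n, (f n <= f N)%R.
Proof.
move=> le_fK.
suff ind k N : (K - f N <= k%:Z)%R -> exists M, forall n, (f n <= f M)%R.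
  by apply: (ind `|K - f 0%N|%N 0%N); lia.
elim: k N => [|k IH] N le_N;
  case: (classic (forall n, (f n <= f N)%R)) => [maxN|/not_all_ex_not [n /negP]];
  try by exists N.
all: rewrite -Order.TotalTheory.ltNge => lt_Nn; have := le_fK n.
- lia.
- by move=> le_nK; apply: (IH n); lia.
Qed.

Lemma mkseq_add (T : Type) (f : nat -> T) j m :
  mkseq f (j + m) = mkseq f j ++ mkseq (fun k => f (j + k)) m.
Proof. by rewrite /mkseq iotaD map_cat add0n -{2}(addn0 j) iotaDl -map_comp. Qed.

Section InfiniteWords.
Variables (A : finType) (u : nat -> A).
Implicit Types (p s w x y : seq A).

Lemma factor_mkseq n : factor u (mkseq u n).
Proof. by exists 0; rewrite /occurs_at size_mkseq. Qed.

Lemma occurs_at_mkseq x j : occurs_at u x j -> mkseq u (j + size x) = mkseq u j ++ x.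
Proof. by rewrite mkseq_add => <-. Qed.

Lemma occurs_at_cat n p x s : mkseq u n = p ++ x ++ s -> occurs_at u x (size p).
Proof.
move=> Eu; have := congr1 size Eu; rewrite size_mkseq !size_cat => En.
move: Eu; rewrite En addnA mkseq_add mkseq_add -catA => /eqP.
rewrite eqseq_cat ?size_mkseq // => /andP [_]; rewrite eqseq_cat ?size_mkseq //.
by case/andP=> /eqP.
Qed.

Lemma infix_occurs_at w i m : occurs_at u w i -> i + size w <= m -> infix w (mkseq u m).
Proof.
move=> occ_w /subnKC <-; rewrite mkseq_add occurs_at_mkseq // -catA.
exact: infix_infix.
Qed.

Lemma factor_infix x y : infix x y -> factor u y -> factor u x.
Proof.
move=> /infixP [s [s' ->]] [k /occurs_at_mkseq Ek].
by exists (size (mkseq u k ++ s)); apply: occurs_at_cat; rewrite -catA; exact: Ek.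
Qed.

Lemma defect_mkseq_homo (Th : seq A -> seq A) : involutive_antimorphism Th ->
  {homo (fun n => defect Th (mkseq u n)) : m n / m <= n >-> (m <= n)%R}.
Proof. by move=> Th_antimorph m n /subnKC <-; rewrite mkseq_add defect_catr. Qed.

End InfiniteWords.

Theorem lemma1 (A : finType) (Th : seq A -> seq A) (u : nat -> A) :
  involutive_antimorphism Th -> recurrent u -> finite_defect Th u ->
  forall w, factor u w -> factor u (Th w).
Proof.
move=> Th_antimorph rec_u [K le_defect_K] w [i occ_w].
pose D n := defect Th (mkseq u n).
have [N maxN] : exists N, forall n, (D n <= D N)%R.
  by apply: (@bounded_int_seq_max _ K) => n; apply/le_defect_K/factor_mkseq.
pose m := (N + i + size w).+1.
have [j [j_gt0 occ_m]] := rec_u _ (factor_mkseq u m) 1.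
pose n := j.-1 + m.
have pre_n1 : mkseq u n.+1 = mkseq u j ++ mkseq u m.
  by rewrite -(occurs_at_mkseq occ_m) size_mkseq /n -addSn prednK.
have pre_m_n : infix (mkseq u m) (mkseq u n) by rewrite /n addnC mkseq_add prefix_infix.
have suff_m : suffix (mkseq u m) (rcons (mkseq u n) (u n)).
  by rewrite -mkseqS pre_n1 suffix_suffix.
have un_in : u n \in mkseq u n.
  by apply: mem_suffix_infix_rcons suff_m pre_m_n; rewrite -size_eq0 size_mkseq.
have stable : (defect Th (rcons (mkseq u n) (u n)) <= defect Th (mkseq u n))%R.
  rewrite -mkseqS; apply: Order.le_trans (maxN n.+1) (defect_mkseq_homo u Th_antimorph _).
  by rewrite /n /m; lia.
have [q [suff_q pal_q new_q]] := new_pal_suffix Th_antimorph un_in stable.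
have w_m : infix w (mkseq u m) by apply: infix_occurs_at occ_w _; rewrite /m; lia.
apply: factor_infix (infix_Th Th_antimorph w_m) _.
apply: factor_infix (factor_mkseq u n.+1).
by rewrite mkseqS; apply: infix_Th_pal_suffix suff_m pre_m_n suff_q pal_q new_q.
Qed.
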